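(* Let $X$ be a finite, simple, connected $3$-valent plane graph such that the number of edges surrounding each face is divisible by $3$. Then $V(X)$ admits a coloring by two colors, black and white, such that: (C-i) every black vertex is adjacent to three white vertices; (C-ii) every white vertex is adjacent to exactly one black vertex (so its other two neighbours are white); (C-iii) for any pair of black vertices $x,y$ at graph distance $3$ from each other, there is a path from $x$ to $y$ of length $3$ which either turns left at both of its interior vertices or turns right at both of its interior vertices.
   Context: In a $3$-valent plane graph, a path $\dots,u,v,w,\dots$ arriving at $v$ along the edge $uv$ and leaving along the edge $vw\neq uv$ turns right (resp. left) at $v$ according as $vw$ is the edge following $uv$ in the clockwise (resp. counterclockwise) order of the three edges around $v$ determined by the plane embedding. *)

From mathcomp Require Import all_boot fingroup perm.
Set Implicit Arguments. Unset Strict Implicit. Unset Printing Implicit Defensive.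

(* A plane graph is encoded combinatorially by a rotation system (combinatorial
   map) of genus 0.  Darts D (half-edges); [tl d] is the vertex at which dart d
   starts; [alpha] is the fixed-point-free involution reversing a dart;
   [sigma] is the rotation: [sigma d] is the dart following d in the clockwise
   order around the vertex [tl d]. *)

Section Map.
Variables (V D : finType) (tl : D -> V) (alpha : D -> D) (sigma : {perm D}).

Definition face_perm (d : D) : D := sigma (alpha d).

Definition adj (x y : V) : bool := [exists d, (tl d == x) && (tl (alpha d) == y)].

Definition number_of_edges : nat := #|D| %/ 2.
Definition number_of_faces : nat := fcard face_perm D.

Definition cubic_plane_graph : Prop :=
      (forall d, alpha (alpha d) = d) /\ (forall d, alpha d != d) /\
      (forall d, tl (sigma d) = tl d) /\
      (forall d e, tl d = tl e -> fconnect sigma d e) /\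
      (forall x : V, #|[set d | tl d == x]| = 3) /\
      (forall d, tl (alpha d) != tl d) /\
      (forall d e, tl d = tl e -> tl (alpha d) = tl (alpha e) -> d = e) /\
      (forall x y : V, connect adj x y) /\
      (* plane: the embedding has genus 0 (Euler's formula) *)
      (#|V| + number_of_faces = number_of_edges + 2)%N.

Definition faces_div3 : Prop := forall d : D, 3 %| fingraph.order face_perm d.

Definition dist3 (x y : V) : Prop :=
  [/\ x <> y, ~~ adj x y, ~ (exists z, adj x z && adj z y) &
      exists z1 z2, [&& adj x z1, adj z1 z2 & adj z2 y]].

(* a path x = v0, v1, v2, v3 = y given by darts d1 (v0->v1), d2 (v1->v2),
   d3 (v2->v3) that turns right at v1 and v2: the leaving dart is the one
   following the arrival dart (alpha of the previous) clockwise. *)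
Definition right_right_path (x y : V) : Prop :=
  exists d1, tl d1 = x /\
    tl (alpha (sigma (alpha (sigma (alpha d1))))) = y.
Definition left_left_path (x y : V) : Prop :=
  exists d1, tl d1 = x /\
    tl (alpha ((sigma^-1)%g (alpha ((sigma^-1)%g (alpha d1))))) = y.

Definition coloring_ok (black : V -> bool) : Prop :=
  [/\ (forall x y, black x -> adj x y -> ~~ black y),
      (forall x, ~~ black x -> #|[set y | adj x y && black y]| = 1) &
      (forall x y, black x -> black y -> dist3 x y ->
                        right_right_path x y \/ left_left_path x y)].
End Map.

From mathcomp Require Import all_boot fingroup perm all_algebra zify ring.
Set Implicit Arguments. Unset Strict Implicit. Unset Printing Implicit Defensive.
Import GRing.Theory.
Local Open Scope ring_scope.

(* Number the three darts at each vertex clockwise by k : darts -> F_3.  As every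
   face has length divisible by 3, the cochain d |-> k d - k (alpha d) sums to 0
   around every face.  For a connected plane graph Euler's formula makes the face
   boundaries span all cycles (a rank count on incidence matrices), so such a
   cochain is a coboundary; correcting k by its potential gives a labelling P of
   the edges by F_3 that increases by 1 clockwise around every vertex.  Composing P
   with a bijection klein from F_3 onto the non-zero elements of F_2 x F_2 (whose
   sum is 0) gives another cochain vanishing on faces, with a potential
   f : V -> F_2 x F_2; the black vertices are the zeros of f.  The three edges at
   a vertex carry the three non-zero values, which gives (C-i) and (C-ii), and the
   labels along a path of length 3 sum to 0 only if both turns have the same
   direction, which gives (C-iii). *)

Lemma sum_fconnect (T : finType) (M : nmodType) (f : T -> T) (G : T -> M) x :
  \sum_(y | fconnect f x y) G y = \sum_(0 <= j < fingraph.order f x) G (iter j f x).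
Proof.
rewrite (eq_bigl (mem (orbit f x))) => [|y]; last by rewrite fconnect_orbit.
rewrite -big_uniq ?orbit_uniq // /orbit.
elim: (fingraph.order f x) => [|n IHn]; first by rewrite big_nil big_geq.
by rewrite trajectSr big_rcons IHn big_nat_recr.
Qed.

Lemma iter_label (T : Type) (R : pzSemiRingType) (f : T -> T) (k : T -> R) :
  (forall x, k (f x) = k x + 1) -> forall j x, k (iter j f x) = k x + j%:R.
Proof. by move=> kf; elim=> [|j IHj] x; rewrite ?addr0 // iterS kf IHj -natr1 addrA. Qed.

Lemma exists_orbit_label (T : finType) (R : pzSemiRingType) (f : T -> T) :
  injective f -> (forall x, (fingraph.order f x)%:R = 0 :> R) ->
  exists k : T -> R, forall x, k (f x) = k x + 1.
Proof.
move=> finj order0; exists (fun x => (findex f (froot f x) x)%:R) => x /=.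
have -> : froot f (f x) = froot f x.
  by apply/esym/(fingraph.rootP (fconnect_sym finj))/fconnect1.
have rx : fconnect f (froot f x) x by rewrite fconnect_sym ?connect_root.
move: (froot f x) rx => r rx; rewrite natr1.
have xE := iter_findex rx; have := findex_max rx.
rewrite leq_eqVlt => /predU1P [ordE|ltS].
- have -> : f x = r by rewrite -{1}xE -iterS ordE iter_order.
  by rewrite findex0 ordE order0.
- by rewrite -{1}xE -iterS findex_iter.
Qed.

Lemma natr_F3_eq0 n : (3 %| n)%N -> n%:R = 0 :> 'F_3.
Proof. by move=> /dvdnP [q ->]; rewrite natrM (pchar_Fp_0 (isT : prime 3)) mulr0. Qed.

Lemma sum_period3 (M : nmodType) (c : 'F_3 -> M) a n :
  (forall b, c b + c (b + 1) + c (b + 1 + 1) = 0) -> (3 %| n)%N ->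
  \sum_(0 <= j < n) c (a + j%:R) = 0.
Proof.
move=> c3 /dvdnP [q ->]; elim: q => [|q IHq]; first by rewrite big_geq.
rewrite mulSn addnC addn3 !big_nat_recr //= IHq add0r -!natr1.
by rewrite natr_F3_eq0 ?dvdn_mull // !add0r addr0 !addrA c3.
Qed.

Lemma F3_cases (x : 'F_3) : [\/ x = 0, x = 1 | x = 1 + 1].
Proof.
by case: x => [[|[|[|//]]]] ?; [constructor 1 | constructor 2 | constructor 3];
  apply: val_inj.
Qed.

Lemma F2_cases (x : 'F_2) : x = 0 \/ x = 1.
Proof. by case: x => [[|[|//]]] ?; [left|right]; apply: val_inj. Qed.

Lemma F2_opp (x : 'F_2) : - x = x.
Proof. exact: oppr_pchar2 (pchar_Fp (isT : prime 2)) x. Qed.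

Definition klein (a : 'F_3) : 'F_2 * 'F_2 :=
  if a == 0 then (1, 0) else if a == 1 then (0, 1) else (1, 1).

Lemma F2xF2_addr_eq0 (y z : 'F_2 * 'F_2) : (y + z == 0) = (y == z).
Proof. by case: z => a b; rewrite addr_eq0 (_ : - (a, b) = (- a, - b)) // !F2_opp. Qed.

Lemma klein_sum a : klein a + klein (a + 1) + klein (a + 1 + 1) = 0.
Proof. by apply/eqP; case: (F3_cases a) => ->. Qed.

Lemma klein_sum_fst a : (klein a).1 + (klein (a + 1)).1 + (klein (a + 1 + 1)).1 = 0.
Proof. by have := congr1 fst (klein_sum a). Qed.

Lemma klein_sum_snd a : (klein a).2 + (klein (a + 1)).2 + (klein (a + 1 + 1)).2 = 0.
Proof. by have := congr1 snd (klein_sum a). Qed.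

Lemma klein_neq0 a : klein a != 0.
Proof. by case: (F3_cases a) => ->. Qed.

Lemma klein_inj : injective klein.
Proof. by move=> a b; case: (F3_cases a) => ->; case: (F3_cases b) => -> /eqP. Qed.

Lemma klein_onto z : z != 0 -> exists a, klein a = z.
Proof.
case: z => a b; case: (F2_cases a) => ->; case: (F2_cases b) => -> // _.
- by exists 1.
- by exists 0.
- by exists (1 + 1).
Qed.

Lemma klein_path p k m : k != 0 -> m != 0 ->
  klein p + klein (p + k) + klein (p + k + m) = 0 -> k = m.
Proof.
case: (F3_cases k) => -> //; case: (F3_cases m) => -> //;
  by case: (F3_cases p) => -> _ _ /eqP.
Qed.

Section IncidenceMatrix.
Variables (K : fieldType) (X Y : finType) (f g : Y -> X).

Definition incidence_mx : 'M[K]_(#|X|, #|Y|) :=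
  \matrix_(i, j) ((enum_val i == f (enum_val j))%:R - (enum_val i == g (enum_val j))%:R).

Lemma mul_incidence_mx (u : 'rV[K]_#|X|) j :
  (u *m incidence_mx) 0 j =
    u 0 (enum_rank (f (enum_val j))) - u 0 (enum_rank (g (enum_val j))).
Proof.
have pick_coord x : \sum_i u 0 i * (enum_val i == x)%:R = u 0 (enum_rank x).
  rewrite (bigD1 (enum_rank x)) //= enum_rankK eqxx mulr1 big1 ?addr0 // => i ne_ix.
  by rewrite -(enum_rankK x) (can_eq enum_valK) (negbTE ne_ix) mulr0.
by rewrite mxE -!pick_coord -sumrB; apply: eq_bigr => i _; rewrite mxE mulrBr.
Qed.

Lemma mxrank_incidence_mx :
    (forall w : X -> K, (forall y, w (f y) = w (g y)) -> forall x x', w x = w x') ->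
  (#|X| <= (\rank incidence_mx).+1)%N.
Proof.
move=> w_const; case: (pickP X) => [x0 _|X0]; last by rewrite {1}(eq_card0 X0).
have ker_const : (kermx incidence_mx <= (const_mx 1 : 'rV[K]_#|X|))%MS.
  apply/row_subP => i; apply/sub_rVP; set u := row i _.
  have u_const : forall x x', u 0 (enum_rank x) = u 0 (enum_rank x').
    apply: w_const => y; apply/eqP; rewrite -subr_eq0 -(enum_rankK y).
    by rewrite -mul_incidence_mx -row_mul mulmx_ker row0 mxE.
  clearbody u; exists (u 0 (enum_rank x0)); apply/rowP => j.
  by rewrite !mxE mulr1 -(enum_valK j) (u_const _ x0).
have := mxrankS ker_const; rewrite mxrank_ker.
have := rank_leq_row (const_mx 1 : 'rV[K]_#|X|); lia.
Qed.

Lemma mul_tr_incidence_mx m (M : 'M[K]_(m, #|Y|)) i k :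
  (M *m incidence_mx^T) i k =
    \sum_y M i (enum_rank y) * ((enum_val k == f y)%:R - (enum_val k == g y)%:R).
Proof.
rewrite mxE (reindex (@enum_rank Y)) /=; last exact: onW_bij _ (@enum_rank_bij Y).
by apply: eq_bigr => y _; rewrite !mxE enum_rankK.
Qed.

End IncidenceMatrix.

Lemma kermx_tr_sub (K : fieldType) m k n (B : 'M[K]_(m, n)) (C : 'M[K]_(k, n)) :
  B *m C^T = 0 -> (n <= \rank B + \rank C)%N -> (kermx C^T <= B)%MS.
Proof.
move=> BC rk; have B_ker : (B <= kermx C^T)%MS by apply/sub_kermxP.
rewrite -(geq_leqif (mxrank_leqif_sup B_ker)) mxrank_ker mxrank_tr; lia.
Qed.

Section CubicMap.
Variables (V D : finType) (tl : D -> V) (alpha : D -> D) (sigma : {perm D}).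
Hypotheses (alphaK : involutive alpha) (alpha_neq : forall d, alpha d != d)
  (tl_sigma : forall d, tl (sigma d) = tl d)
  (sigma_transitive : forall d e, tl d = tl e -> fconnect sigma d e)
  (connected : forall x y, connect (adj tl alpha) x y)
  (euler : (#|V| + number_of_faces alpha sigma = number_of_edges D + 2)%N)
  (degree3 : forall x, #|[set d | tl d == x]| = 3)
  (faces3 : faces_div3 alpha sigma).

Local Notation phi := (face_perm alpha sigma).

Lemma face_perm_inj : injective phi.
Proof. by move=> d e /perm_inj /(can_inj alphaK). Qed.

Lemma face_perm_sym : connect_sym (frel phi).
Proof. exact: fconnect_sym face_perm_inj. Qed.

Lemma tl_face_perm d : tl (phi d) = tl (alpha d).
Proof. exact: tl_sigma. Qed.

Lemma adj_invariant_const (R : eqType) (w : V -> R) :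
  (forall d, w (tl (alpha d)) = w (tl d)) -> forall x y, w x = w y.
Proof.
move=> w_alpha x y; apply/eqP; rewrite -[_ == _]/(y \in [pred z | w x == w z]).
rewrite -(closed_connect _ (connected x y)) ?inE //.
by move=> _ _ /existsP [d /andP [/eqP <- /eqP <-]]; rewrite !inE w_alpha.
Qed.

Lemma dart_invariant_const (R : eqType) (Y : D -> R) :
    (forall d, Y (alpha d) = Y d) -> (forall d, Y (sigma d) = Y d) ->
  forall d e, Y d = Y e.
Proof.
move=> Y_alpha Y_sigma d0 e0.
have Y_vertex d e : tl d = tl e -> Y d = Y e.
  by move/sigma_transitive; apply: fconnect_invariant => c; apply/eqP/Y_sigma.
pose w x := if [pick d | tl d == x] is Some d then Y d else Y d0.
have w_tl d : w (tl d) = Y d.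
  by rewrite /w; case: pickP => [c /eqP /Y_vertex // | /(_ d)]; rewrite eqxx.
rewrite -w_tl -(w_tl e0); apply: adj_invariant_const => d.
by rewrite !w_tl Y_alpha.
Qed.

Definition edge_repr : {pred D} := [pred d | (enum_rank d < enum_rank (alpha d))%N].
Definition edge : finType := {d in edge_repr}.

Lemma edge_repr_alpha d : (alpha d \in edge_repr) = (d \notin edge_repr).
Proof.
rewrite !inE alphaK ltnNge leq_eqVlt -[(enum_rank d : nat) == _]/(enum_rank d == _).
by rewrite (can_eq enum_rankK) eq_sym (negbTE (alpha_neq d)).
Qed.

Lemma edge_cases d : exists e : edge, d = val e \/ d = alpha (val e).
Proof.
case: (boolP (d \in edge_repr)) => [de | /negbTE da]; first by exists (Sub d de); left.
have da' : alpha d \in edge_repr by rewrite edge_repr_alpha da.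
by exists (Sub (alpha d) da'); right; rewrite /= alphaK.
Qed.

Lemma card_edge : number_of_edges D = #|edge|.
Proof.
have card_compl : #|[predC edge_repr]| = #|edge_repr|.
  rewrite -(card_image (can_inj alphaK) edge_repr); apply: eq_card => d.
  by rewrite -[in RHS](alphaK d) (mem_image (can_inj alphaK)) edge_repr_alpha.
by rewrite /number_of_edges card_sig -(cardC edge_repr) card_compl addnn divn2 doubleK.
Qed.

Lemma sum_edges (M : nmodType) (G : D -> M) :
  \sum_(e : edge) (G (val e) + G (alpha (val e))) = \sum_d G d.
Proof.
rewrite big_split -(big_sub _ G) -(big_sub _ (G \o alpha)).
rewrite [RHS](bigID [in edge_repr]) /=; congr (_ + _).
rewrite [RHS](reindex alpha); last exact: onW_bij (inv_bij alphaK).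
by apply: eq_bigl => d; rewrite edge_repr_alpha negbK.
Qed.

Definition face : finType := {d in froots phi}.

Definition face_of (d : D) : face :=
  Sub (froot phi d) (roots_root face_perm_sym d).

Lemma card_face : number_of_faces alpha sigma = #|face|.
Proof. by rewrite card_sig; apply: eq_card => d; rewrite !inE andbT. Qed.

Lemma face_of_perm d : face_of (phi d) = face_of d.
Proof. exact/val_inj/esym/(fingraph.rootP face_perm_sym)/fconnect1. Qed.

Lemma face_ofE d (r : face) : (face_of d == r) = fconnect phi (val r) d.
Proof.
rewrite -(inj_eq val_inj) /= -[X in _ == X](eqP (valP r)).
by rewrite (root_connect face_perm_sym) face_perm_sym.
Qed.

Lemma face_of_val (r : face) : face_of (val r) = r.
Proof. exact/val_inj/eqP/(valP r). Qed.

Section Cochains.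
Variable K : fieldType.

Definition vertex_incidence : 'M[K]_(#|V|, #|edge|) :=
  incidence_mx K (fun e : edge => tl (alpha (val e))) (fun e => tl (val e)).

Definition face_incidence : 'M[K]_(#|face|, #|edge|) :=
  incidence_mx K (fun e : edge => face_of (val e)) (fun e => face_of (alpha (val e))).

Lemma mxrank_vertex_incidence : (#|V| <= (\rank vertex_incidence).+1)%N.
Proof.
apply: mxrank_incidence_mx => w w_edge; apply: adj_invariant_const => d.
by have [e [-> | ->]] := edge_cases d; rewrite ?alphaK w_edge.
Qed.

Lemma mxrank_face_incidence : (#|face| <= (\rank face_incidence).+1)%N.
Proof.
apply: mxrank_incidence_mx => w w_edge r r'; pose Y d := w (face_of d).
have Y_alpha d : Y (alpha d) = Y d.
  by have [e [-> | ->]] := edge_cases d; rewrite /Y ?alphaK w_edge.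
have Y_sigma d : Y (sigma d) = Y d.
  have -> : sigma d = phi (alpha d) by rewrite /face_perm alphaK.
  by rewrite /Y face_of_perm -/(Y _) Y_alpha.
rewrite -(face_of_val r) -(face_of_val r').
exact: dart_invariant_const Y_alpha Y_sigma _ _.
Qed.

Lemma sum_edges_face (h : D -> K) (r : face) : (forall d, h (alpha d) = - h d) ->
  \sum_(e : edge) h (val e) * ((r == face_of (val e))%:R - (r == face_of (alpha (val e)))%:R)
  = \sum_(d | face_of d == r) h d.
Proof.
move=> h_alpha; rewrite [RHS]big_mkcond -sum_edges; apply: eq_bigr => e _.
rewrite h_alpha mulrBr !(eq_sym r).
by case: (face_of _ == r); case: (face_of _ == r);
  rewrite ?(mulr1, mulr0, subr0, sub0r, addr0, add0r).
Qed.

Lemma vertex_face_incidence : vertex_incidence *m face_incidence^T = 0.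
Proof.
apply/matrixP => x r; rewrite mul_tr_incidence_mx mxE.
pose h d : K := (enum_val x == tl (alpha d))%:R - (enum_val x == tl d)%:R.
transitivity (\sum_(d | face_of d == enum_val r) h d).
  rewrite -sum_edges_face => [|d]; last by rewrite /h alphaK opprB.
  by apply: eq_bigr => e _; rewrite mxE enum_rankK.
rewrite sumrB [X in _ - X](reindex phi); last exact: onW_bij (injF_bij face_perm_inj).
by apply/eqP; rewrite subr_eq0; apply/eqP/eq_big => d; rewrite ?face_of_perm ?tl_face_perm.
Qed.

Lemma cochain_face_incidence (t : D -> K) :
    (forall d, t (alpha d) = - t d) ->
    (forall d, \sum_(0 <= j < fingraph.order phi d) t (iter j phi d) = 0) ->
  (\row_(j < #|edge|) t (val (enum_val j))) *m face_incidence^T = 0.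
Proof.
move=> t_alpha t_face; apply/rowP => r; rewrite mul_tr_incidence_mx mxE.
transitivity (\sum_(d | face_of d == enum_val r) t d).
  by rewrite -sum_edges_face //; apply: eq_bigr => e _; rewrite mxE enum_rankK.
by rewrite (eq_bigl _ _ (face_ofE^~ _)) sum_fconnect t_face.
Qed.

Lemma exists_potential (t : D -> K) :
    (forall d, t (alpha d) = - t d) ->
    (forall d, \sum_(0 <= j < fingraph.order phi d) t (iter j phi d) = 0) ->
  exists p : V -> K, forall d, t d = p (tl (alpha d)) - p (tl d).
Proof.
move=> t_alpha t_face; set tv := \row_(j < #|edge|) t (val (enum_val j)).
have rank_sum : (#|edge| <= \rank vertex_incidence + \rank face_incidence)%N.
  have := mxrank_vertex_incidence; have := mxrank_face_incidence.
  by move: euler; rewrite card_edge card_face; lia.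
have /submxP [u tvE] : (tv <= vertex_incidence)%MS.
  apply: submx_trans (kermx_tr_sub vertex_face_incidence rank_sum).
  by apply/sub_kermxP/cochain_face_incidence.
exists (fun x => u 0 (enum_rank x)).
have t_edge (e : edge) :
    t (val e) = u 0 (enum_rank (tl (alpha (val e)))) - u 0 (enum_rank (tl (val e))).
  by have /rowP /(_ (enum_rank e)) := tvE; rewrite mul_incidence_mx !mxE enum_rankK.
move=> d; have [e [-> | ->]] := edge_cases d; first exact: t_edge.
by rewrite t_alpha t_edge alphaK opprB.
Qed.

End Cochains.

Lemma exists_dart x : exists d, tl d = x.
Proof.
have /card_gt0P [d] : (0 < #|[set d | tl d == x]|)%N by rewrite degree3.
by rewrite inE => /eqP; exists d.
Qed.

Lemma tl_iter_sigma k d : tl (iter k sigma d) = tl d.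
Proof. by elim: k => //= k <-; apply: tl_sigma. Qed.

Lemma order_sigma d : fingraph.order sigma d = 3.
Proof.
rewrite -(degree3 (tl d)); apply: eq_card => e; rewrite inE.
apply/idP/eqP => [/iter_findex <-|/esym/sigma_transitive //].
exact: tl_iter_sigma.
Qed.

Lemma permV_sigma d : (sigma^-1)%g d = sigma (sigma d).
Proof.
apply: (@perm_inj _ sigma); rewrite permKV.
by have := iter_order (@perm_inj _ sigma) d; rewrite order_sigma.
Qed.

Lemma exists_vertex_label :
  exists P : D -> 'F_3, (forall d, P (alpha d) = P d) /\ (forall d, P (sigma d) = P d + 1).
Proof.
have [k k_sigma] : exists k : D -> 'F_3, forall d, k (sigma d) = k d + 1.
  by apply: exists_orbit_label (@perm_inj _ sigma) _ => d; rewrite order_sigma natr_F3_eq0.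
pose t d := k d - k (alpha d).
have t_face d : \sum_(0 <= j < fingraph.order phi d) t (iter j phi d) = 0.
  have t_iter j : t (iter j phi d) = - k (iter j.+1 phi d) - - k (iter j phi d) + 1.
    by rewrite iterS /face_perm k_sigma /t; ring.
  rewrite (eq_bigr _ (fun j _ => t_iter j)) big_split /= telescope_sumr //.
  rewrite sumr_const_nat subn0 (iter_order face_perm_inj) subrr add0r.
  exact: natr_F3_eq0 (faces3 d).
have [|p pE] := exists_potential (t := t) _ t_face; first by move=> d; rewrite /t alphaK opprB.
exists (fun d => p (tl d) + k d); split=> d; last by rewrite tl_sigma k_sigma addrA.
by rewrite -[p (tl (alpha d))](subrK (p (tl d))) -pE /t; ring.
Qed.

Section Coloring.
Variable P : D -> 'F_3.
Hypotheses (P_alpha : forall d, P (alpha d) = P d) (P_sigma : forall d, P (sigma d) = P d + 1).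

Lemma P_face_perm d : P (phi d) = P d + 1.
Proof. by rewrite /face_perm P_sigma P_alpha. Qed.

(* [P e - P d] enters [iter] through the coercion of 'F_3 = 'I_3 to nat. *)
Lemma dart_at_vertex d e : tl d = tl e -> e = iter (P e - P d)%R sigma d.
Proof.
move=> /sigma_transitive de; have := findex_max de; rewrite order_sigma.
move: (iter_findex de); set k := findex sigma d e => <- lt3.
by rewrite (iter_label P_sigma) addrC addKr val_Fp_nat // modn_small.
Qed.

Lemma exists_klein_potential :
  exists f : V -> 'F_2 * 'F_2, forall d, f (tl (alpha d)) = f (tl d) + klein (P d).
Proof.
have coord (c : 'F_3 -> 'F_2) : (forall b, c b + c (b + 1) + c (b + 1 + 1) = 0) ->
    exists g : V -> 'F_2, forall d, g (tl (alpha d)) = g (tl d) + c (P d).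
  move=> c3; have [d|d|g gE] := exists_potential (t := fun d => c (P d)).
  - by rewrite P_alpha F2_opp.
  - under eq_bigr do rewrite (iter_label P_face_perm).
    exact: sum_period3 c3 (faces3 d).
  by exists g => d; rewrite gE addrC subrK.
have [g1 g1E] := coord _ klein_sum_fst; have [g2 g2E] := coord _ klein_sum_snd.
by exists (fun x => (g1 x, g2 x)) => d; rewrite g1E g2E.
Qed.

Variable f : V -> 'F_2 * 'F_2.
Hypothesis f_edge : forall d, f (tl (alpha d)) = f (tl d) + klein (P d).

Lemma black_neighbor_white x y : f x == 0 -> adj tl alpha x y -> f y != 0.
Proof.
move=> /eqP fx0 /existsP [d /andP [/eqP dx /eqP <-]].
by rewrite f_edge dx fx0 add0r klein_neq0.
Qed.

Lemma white_unique_black_neighbor x :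
  f x != 0 -> #|[set y | adj tl alpha x y && (f y == 0)]| = 1.
Proof.
move=> fx; have [a ka] := klein_onto fx; have [d dx] := exists_dart x.
pose e := iter (a - P d)%R sigma d.
have ex : tl e = x by rewrite tl_iter_sigma dx.
have Pe : P e = a by rewrite /e (iter_label P_sigma) natr_Zp addrC subrK.
have black_edge e' : tl e' = x -> (f (tl (alpha e')) == 0) = (e' == e).
  move=> e'x; rewrite f_edge e'x F2xF2_addr_eq0 -ka (inj_eq klein_inj).
  apply/eqP/eqP => [Pe' | ->//].
  by rewrite (dart_at_vertex (etrans ex (esym e'x))) -Pe' Pe subrr.
rewrite (_ : [set y | _] = [set tl (alpha e)]) ?cards1 //; apply/setP => y; rewrite !inE.
apply/andP/eqP => [[/existsP [e' /andP [/eqP e'x /eqP <-]]] | ->].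
  by rewrite black_edge // => /eqP ->.
by split; [apply/existsP; exists e; rewrite ex !eqxx | rewrite black_edge ?eqxx].
Qed.

Lemma black_dist3_turns x y : f x == 0 -> f y == 0 -> dist3 tl alpha x y ->
  right_right_path tl alpha sigma x y \/ left_left_path tl alpha sigma x y.
Proof.
move=> /eqP fx0 /eqP fy0 [_ nxy _ [z1 [z2 /and3P []]]].
move=> /existsP [d /andP [/eqP dx /eqP dz1]] /existsP [e2 /andP [/eqP e2z1 /eqP e2z2]].
move=> /existsP [e3 /andP [/eqP e3z2 /eqP e3y]].
have not_adj e : tl e = x -> tl (alpha e) = y -> False.
  by move=> ex ey; case/negP: nxy; apply/existsP; exists e; rewrite ex ey !eqxx.
have e2E := dart_at_vertex (etrans dz1 (esym e2z1)).
have e3E := dart_at_vertex (etrans e2z2 (esym e3z2)).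
rewrite P_alpha in e2E; rewrite P_alpha in e3E.
set k := (P e2 - P d)%R in e2E; set m := (P e3 - P e2)%R in e3E.
have k0 : k != 0.
  apply/eqP => k0; apply: (not_adj e3) e3y.
  have e2d : e2 = alpha d by rewrite e2E k0.
  by rewrite e3z2 -e2z2 e2d alphaK.
have m0 : m != 0.
  apply/eqP => m0; apply: (not_adj d dx).
  have e3e2 : e3 = alpha e2 by rewrite e3E m0.
  by rewrite dz1 -e2z1 -e3y e3e2 alphaK.
have km : k = m.
  have Pe2 : P d + k = P e2 by rewrite /k addrC subrK.
  have Pe3 : P e2 + m = P e3 by rewrite /m addrC subrK.
  apply: (@klein_path (P d) k m k0 m0); rewrite Pe2 Pe3.
  by rewrite -fy0 -e3y f_edge e3z2 -e2z2 f_edge e2z1 -dz1 f_edge dx fx0 add0r.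
case: (F3_cases k) k0 => kE; rewrite kE // => _.
- by left; exists d; split=> //; rewrite -e3y e3E -km kE e2E kE.
- by right; exists d; split=> //; rewrite !permV_sigma -e3y e3E -km kE e2E kE.
Qed.

End Coloring.

Lemma exists_coloring : exists black : V -> bool, coloring_ok tl alpha sigma black.
Proof.
have [P [P_alpha P_sigma]] := exists_vertex_label.
have [f f_edge] := exists_klein_potential P_alpha P_sigma.
exists (fun x => f x == 0); split.
- exact: black_neighbor_white f_edge.
- exact: white_unique_black_neighbor f_edge.
- exact: black_dist3_turns f_edge.
Qed.

End CubicMap.

Theorem proposition2p10 (V D : finType) (tl : D -> V) (alpha : D -> D)
    (sigma : {perm D}) :
  cubic_plane_graph tl alpha sigma ->
  faces_div3 alpha sigma ->
  exists black : V -> bool, coloring_ok tl alpha sigma black.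
Proof.
move=> [alphaK [alpha_neq [tl_sigma [sigma_transitive [degree3 [_ [_ [connected euler]]]]]]]].
move=> faces3; exact: exists_coloring alphaK alpha_neq tl_sigma sigma_transitive
  connected euler degree3 faces3.
Qed.
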